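(* Consider the reaction network $\mathcal{G}_1$ with species $X_1,X_2,X_3,X_4$ and reactions $X_1+X_2\to\emptyset$, $X_2+X_3\to\emptyset$, $X_3+X_4\to\emptyset$, $X_4\to X_1$, $X_1\to\emptyset$, $\emptyset\rightleftharpoons X_2$, $\emptyset\rightleftharpoons X_3$, $\emptyset\rightleftharpoons X_4$, with arbitrary positive rate constants, together with the input reaction $\emptyset\to X_1$ of rate $\zeta$. Then for every choice of positive rate constants and every $\mathbf{x}\in\mathbb{R}^4_{>0}$, the $3\times3$ matrix $B(\mathbf{x})$ obtained from the Jacobian of the mass-action vector field by deleting its first row and last column has $\det B(\mathbf{x})\neq0$. In particular, $\mathcal{G}_1$ cannot exhibit infinitesimal homeostasis (input $X_1$, output $X_4$) for any choice of rate constants and any $\zeta$.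
   Context: Mass-action dynamics: $\dot{\mathbf{x}}=\mathbf{f}(\mathbf{x},\mathbf{k})+\zeta\mathbf{e}_1$, where $\mathbf{f}(\mathbf{x},\mathbf{k})=\sum_{\mathbf{y}\to\mathbf{y}'}k_{\mathbf{y}\to\mathbf{y}'}\mathbf{x}^{\mathbf{y}}(\mathbf{y}'-\mathbf{y})$ sums over all listed reactions other than $\emptyset\to X_1$ (here $\emptyset$ is the zero vector and $X_i$ is $\mathbf{e}_i$). Infinitesimal homeostasis at a linearly stable positive equilibrium (all Jacobian eigenvalues with negative real part) means $\det B=0$ there, with $B$ the Jacobian with first row and last column deleted. *)

From HB Require Import structures.
From mathcomp Require Import all_boot all_order all_algebra.
From mathcomp Require Import mpoly.
From mathcomp.real_closed Require Import complex.

Set Implicit Arguments.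
Unset Strict Implicit.
Unset Printing Implicit Defensive.
Import Order.TTheory GRing.Theory Num.Theory.
Local Open Scope ring_scope.

(* A complex on species X_1..X_n is a monomial exponent vector y in N^n.
   [cx4 a b c d] is the complex a X1 + b X2 + c X3 + d X4. *)
Definition cx4 (a b c d : nat) : 'X_{1..4} :=
  [multinom nth 0%N [:: a; b; c; d] i | i < 4].

Definition reaction (n : nat) := ('X_{1..n} * 'X_{1..n})%type.

Definition massaction (R : comNzRingType) (n : nat) (rs : seq (reaction n))
  (k : 'I_(size rs) -> R) (i : 'I_n) : {mpoly R[n]} :=
  \sum_(r < size rs)
     k r *: ('X_[(nth (0%MM, 0%MM) rs r).1] *
             ((((nth (0%MM, 0%MM) rs r).2 i)%:R
               - ((nth (0%MM, 0%MM) rs r).1 i)%:R) : R)%:MP).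

Definition with_input (R : comNzRingType) (n : nat)
  (zeta : R) (f : 'I_n.+1 -> {mpoly R[n.+1]}) (i : 'I_n.+1) : {mpoly R[n.+1]} :=
  f i + (if i == ord0 then zeta%:MP else 0).

Definition jacobian (R : comNzRingType) (n : nat)
  (f : 'I_n -> {mpoly R[n]}) (x : 'I_n -> R) : 'M[R]_n :=
  \matrix_(i, j) (mderiv j (f i)).@[x].

Definition Bmat (R : comNzRingType) (n : nat) (J : 'M[R]_n.+1) : 'M[R]_n :=
  row' ord0 (col' ord_max J).

Definition positive_vec (R : numDomainType) (n : nat) (x : 'I_n -> R) :=
  forall i, 0 < x i.

Definition lin_stable (R : rcfType) (n : nat) (J : 'M[R]_n) :=
  forall z : R[i],
    root (map_poly (fun r : R => (r%:C)%C) (char_poly J)) z -> Re z < 0.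

(* Infinitesimal homeostasis at x for the vector field F
   (input X_1, output X_n): x is a linearly stable positive equilibrium
   with det B = 0. *)
Definition inf_homeostasis (R : rcfType) (n : nat)
  (F : 'I_n.+1 -> {mpoly R[n.+1]}) (x : 'I_n.+1 -> R) :=
  [/\ positive_vec x,
      (forall i, (F i).@[x] = 0),
      lin_stable (jacobian F x) &
      \det (Bmat (jacobian F x)) = 0].

Definition G1 : seq (reaction 4) :=
  [:: (cx4 1 1 0 0, cx4 0 0 0 0);
      (cx4 0 1 1 0, cx4 0 0 0 0);
      (cx4 0 0 1 1, cx4 0 0 0 0);
      (cx4 0 0 0 1, cx4 1 0 0 0);
      (cx4 1 0 0 0, cx4 0 0 0 0);
      (cx4 0 0 0 0, cx4 0 1 0 0);
      (cx4 0 1 0 0, cx4 0 0 0 0);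
      (cx4 0 0 0 0, cx4 0 0 1 0);
      (cx4 0 0 1 0, cx4 0 0 0 0);
      (cx4 0 0 0 0, cx4 0 0 0 1);
      (cx4 0 0 0 1, cx4 0 0 0 0)].

(* For G_1, B has rows given by
   the X_2, X_3, X_4 equations and columns by X_1, X_2, X_3.  No reaction
   whose source contains X_1 changes X_3 or X_4, and none whose source
   contains X_2 changes X_4, so B is upper triangular with diagonal
   -k_1 x_2, -k_2 x_3, -k_3 x_4 (k_1, k_2, k_3 the rates of the three
   bimolecular annihilations).  Hence
        det B(x) = - k_1 k_2 k_3 x_2 x_3 x_4,
   which never vanishes for positive rates and positive x.

   The second claim is general: the input reaction adds a constant to f,
   so it does not change the Jacobian, and a network whose det B never
   vanishes on the positive orthant admits no infinitesimal homeostasis. *)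
From HB Require Import structures.
From mathcomp Require Import all_boot all_order all_algebra.
From mathcomp Require Import mpoly ring.
From mathcomp.real_closed Require Import complex.
Import Order.TTheory GRing.Theory Num.Theory.
Local Open Scope ring_scope.

Lemma massaction_jacobian_entry (R : comNzRingType) (n : nat)
    (rs : seq (reaction n)) (k : 'I_(size rs) -> R) (x : 'I_n -> R) i j :
  (mderiv j (massaction k i)).@[x] =
  \sum_(r < size rs)
     k r * (((nth (0%MM, 0%MM) rs r).2 i)%:R - ((nth (0%MM, 0%MM) rs r).1 i)%:R)
     * (((nth (0%MM, 0%MM) rs r).1 j)%:R
        * \prod_(l < n) x l ^+ (((nth (0%MM, 0%MM) rs r).1 - U_(j))%MM l)).
Proof.
rewrite /massaction (big_morph _ (@mderivD _ _ j) (@mderiv0 _ _ j)).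
rewrite (big_morph _ (@mevalD _ _ x) (@meval0 _ _ x)); apply: eq_bigr => r _.
rewrite mderivZ mevalZ [X in mderiv _ X]mulrC mul_mpolyC mderivZ mevalZ.
by rewrite mderivX mevalZ mevalX mulrA.
Qed.

Lemma jacobian_with_input (R : comNzRingType) (n : nat) (zeta : R)
    (f : 'I_n.+1 -> {mpoly R[n.+1]}) (x : 'I_n.+1 -> R) :
  jacobian (with_input zeta f) x = jacobian f x.
Proof.
apply/matrixP => i j; rewrite !mxE /with_input mderivD.
by case: (i == ord0); rewrite ?mderivC ?mderiv0 addr0.
Qed.

Lemma no_inf_homeostasis (R : rcfType) (n : nat)
    (f : 'I_n.+1 -> {mpoly R[n.+1]}) :
  (forall x, positive_vec x -> \det (Bmat (jacobian f x)) != 0) ->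
  forall zeta : R, ~ exists x, inf_homeostasis (with_input zeta f) x.
Proof.
move=> detB_neq0 zeta [x [x_pos _ _]].
by rewrite jacobian_with_input; apply/eqP/detB_neq0.
Qed.

Ltac G1_entry :=
  rewrite /Bmat !mxE !massaction_jacobian_entry /= !big_ord_recl !big_ord0 /=
          !mnmBE !mnm1E /cx4 !mnmE /=.

Lemma G1_Bmat_trig (R : comNzRingType) (k : 'I_(size G1) -> R) (x : 'I_4 -> R) :
  is_trig_mx (Bmat (jacobian (massaction k) x))^T.
Proof.
apply/is_trig_mxP => -[[|[|[|?]]] Hi] [[|[|[|?]]] Hj] //= _; G1_entry; ring.
Qed.

Lemma G1_detB (R : comNzRingType) (k : 'I_(size G1) -> R) (x : 'I_4 -> R) :
  \det (Bmat (jacobian (massaction k) x)) =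
  - (k ord0 * k (lift ord0 ord0) * k (lift ord0 (lift ord0 ord0))
     * x (lift ord0 ord0) * x (lift ord0 (lift ord0 ord0))
     * x (lift ord0 (lift ord0 (lift ord0 ord0)))).
Proof.
rewrite -det_tr det_trig; last exact: G1_Bmat_trig.
rewrite !big_ord_recl big_ord0; G1_entry; ring.
Qed.

Theorem mainTheorem4 (R : rcfType) (k : 'I_(size G1) -> R)
  (hk : forall r, 0 < k r) :
  (forall x : 'I_4 -> R, positive_vec x ->
     \det (Bmat (jacobian (massaction k) x)) != 0)
  /\ (forall zeta : R, ~ exists x : 'I_4 -> R,
        inf_homeostasis (with_input zeta (massaction k)) x).
Proof.
have detB_neq0 : forall x : 'I_4 -> R, positive_vec x ->
    \det (Bmat (jacobian (massaction k) x)) != 0.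
  by move=> x x_pos; rewrite G1_detB oppr_eq0 !mulf_neq0 // lt0r_neq0.
by split=> //; apply: no_inf_homeostasis.
Qed.
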